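(* Let $\kappa>0$ and let $S$ be a $\kappa$-cylindrical surface whose directrix $(x,z)$ is given by the solution of $x'=\cos\theta$, $z'=\sin\theta$, $\theta'=\kappa z$ with $x(0)=0$, $\theta(0)=0$, $z(0)=z_0>0$ (so $z_0$ is the lowest height of $S$ above $\Pi=\{z=0\}$). Then the height $z$ satisfies $$z_0\le z(p)\le\sqrt{\frac4\kappa+z_0^2}\qquad\text{for all }p\in S,$$ and both bounds are attained.
   Context: A $\kappa$-cylindrical surface ($\kappa\ne0$ constant) is a cylindrical ruled surface in $\mathbb R^3$ locally satisfying $\operatorname{div}\big(Du/\sqrt{1+|Du|^2}\big)=\kappa u$; it has horizontal rulings and is parametrized as $(x(s),t,z(s))$ with arc-length directrix $(x,z)$ and $\theta$ the angle between $\partial/\partial x$ and the directrix, satisfying the system above. *)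

From Stdlib Require Import Reals.
From Coquelicot Require Import Coquelicot.
Open Scope R_scope.

(* The solution exists on all of R
   (right-hand side is smooth with |x'|,|z'| <= 1, theta' linear in z) and is
   unique, so quantifying over global solutions is faithful. *)
Definition directrix_solution (kappa z0 : R) (x z th : R -> R) : Prop :=
  (forall s, is_derive x s (cos (th s))) /\
  (forall s, is_derive z s (sin (th s))) /\
  (forall s, is_derive th s (kappa * z s)) /\
  x 0 = 0 /\ th 0 = 0 /\ z 0 = z0.

Definition cyl_surface (x z : R -> R) (p : R * R * R) : Prop :=
  exists s t, p = (x s, t, z s).

Definition height (p : R * R * R) : R := snd p.

(** The quantity [kappa z^2 + 2 cos theta] is a first integral of the
    directrix system, so [z^2 = z0^2 + 2 (1 - cos theta) / kappa] lies in
    [[z0^2, z0^2 + 4/kappa]].  Since [z^2 >= z0^2 > 0], the continuous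
    function [z] never vanishes and stays positive, which gives both bounds;
    the lower one is attained at [s = 0].  Along the way [theta' = kappa z >=
    kappa z0 > 0], so [theta] reaches [PI], where [cos theta = -1] and the
    upper bound is attained. *)

From Stdlib Require Import Reals Lra.
From Coquelicot Require Import Coquelicot.
Open Scope R_scope.

Lemma continuity_of_is_derive (f df : R -> R) :
  (forall s, is_derive f s (df s)) -> continuity f.
Proof.
intros Hf s. apply continuity_pt_filterlim.
apply (ex_derive_continuous f s). exists (df s). apply Hf.
Qed.

Lemma is_derive_0_const (f : R -> R) :
  (forall s, is_derive f s 0) -> forall a b, f b = f a.
Proof.
intros Hf a b.
destruct (MVT_cor4 f (fun _ => 0) a (Rabs (b - a)) (fun c _ => Hf c) b
  (Rle_refl _)) as [c [Hc _]].
lra.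
Qed.

Lemma positive_of_nonvanishing (f : R -> R) :
  continuity f -> (forall s, f s <> 0) -> 0 < f 0 -> forall s, 0 < f s.
Proof.
intros Hcont Hnz Hf0 s.
destruct (Rlt_or_le 0 (f s)) as [Hpos | Hnonpos]; [exact Hpos |].
destruct (IVT_gen f 0 s 0 Hcont) as [c [_ Hc]].
- unfold Rmin, Rmax. destruct (Rle_dec (f 0) (f s)); lra.
- exfalso. exact (Hnz c Hc).
Qed.

Lemma values_above_of_derive_ge (f df : R -> R) (m : R) :
  (forall s, is_derive f s (df s)) -> 0 < m -> (forall s, m <= df s) ->
  forall a, f 0 <= a -> exists s, f s = a.
Proof.
intros Hf Hm Hdf a Ha.
set (s1 := (a - f 0) / m).
assert (Hs1 : 0 <= s1) by (apply Rdiv_le_0_compat; lra).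
assert (Hgrowth : a <= f s1).
{ destruct (MVT_cor4 f df 0 (Rabs (s1 - 0)) (fun c _ => Hf c) s1 (Rle_refl _))
    as [c [Hc _]].
  assert (a - f 0 = m * s1) by (unfold s1; field; lra).
  assert (m * s1 <= df c * s1) by (apply Rmult_le_compat_r; auto).
  lra. }
destruct (IVT_gen f 0 s1 a (continuity_of_is_derive f df Hf)) as [c [_ Hc]].
- unfold Rmin, Rmax. destruct (Rle_dec (f 0) (f s1)); lra.
- exists c. exact Hc.
Qed.

Section Directrix.

Variables (kappa z0 : R) (z th : R -> R).
Hypothesis kappa_pos : 0 < kappa.
Hypothesis z0_pos : 0 < z0.
Hypothesis z_derive : forall s, is_derive z s (sin (th s)).
Hypothesis th_derive : forall s, is_derive th s (kappa * z s).
Hypothesis th_0 : th 0 = 0.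
Hypothesis z_0 : z 0 = z0.

Lemma is_derive_first_integral (s : R) :
  is_derive (fun s => kappa * z s ^ 2 + 2 * cos (th s)) s 0.
Proof.
pose proof (is_derive_scal _ s kappa _ (is_derive_pow z 2 s _ (z_derive s)))
  as Hsqr.
pose proof (is_derive_scal _ s 2 _
  (is_derive_comp cos th s _ _ (is_derive_cos (th s)) (th_derive s))) as Hcos.
replace 0 with
  (kappa * (INR 2 * sin (th s) * z s ^ 1) + 2 * (kappa * z s * - sin (th s)))
  by (simpl; ring).
exact (is_derive_plus _ _ s _ _ Hsqr Hcos).
Qed.

Lemma first_integral (s : R) :
  kappa * z s ^ 2 + 2 * cos (th s) = kappa * z0 ^ 2 + 2.
Proof.
pose proof (is_derive_0_const _ is_derive_first_integral 0 s) as Hconst.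
cbv beta in Hconst. rewrite Hconst, th_0, z_0, cos_0. ring.
Qed.

Lemma sqr_height_bounds (s : R) : z0 ^ 2 <= z s ^ 2 <= 4 / kappa + z0 ^ 2.
Proof.
pose proof (first_integral s). pose proof (COS_bound (th s)).
assert (Hz2 : z s ^ 2 = (2 - 2 * cos (th s)) / kappa + z0 ^ 2)
  by (field_simplify_eq; lra).
rewrite Hz2. split.
- assert (0 <= (2 - 2 * cos (th s)) / kappa) by (apply Rdiv_le_0_compat; lra).
  lra.
- assert ((2 - 2 * cos (th s)) / kappa <= 4 / kappa)
    by (apply Rmult_le_compat_r; [apply Rlt_le, Rinv_0_lt_compat |]; lra).
  lra.
Qed.

Lemma height_pos (s : R) : 0 < z s.
Proof.
apply positive_of_nonvanishing.
- exact (continuity_of_is_derive z _ z_derive).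
- intros t Hzt. pose proof (sqr_height_bounds t). rewrite Hzt in *. nra.
- lra.
Qed.

Lemma height_bounds (s : R) : z0 <= z s <= sqrt (4 / kappa + z0 ^ 2).
Proof.
pose proof (sqr_height_bounds s). pose proof (height_pos s). split.
- nra.
- rewrite <- (sqrt_pow2 (z s)) by lra. apply sqrt_le_1_alt. lra.
Qed.

Lemma height_max_attained : exists s, z s = sqrt (4 / kappa + z0 ^ 2).
Proof.
destruct (values_above_of_derive_ge th _ (kappa * z0) th_derive) with PI
  as [s Hs].
- nra.
- intros s. pose proof (height_bounds s). nra.
- rewrite th_0. pose proof PI_RGT_0. lra.
- exists s. pose proof (first_integral s) as Hint.
  rewrite Hs, cos_PI in Hint.
  rewrite <- (sqrt_pow2 (z s)) by (pose proof (height_pos s); lra).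
  f_equal. apply (Rmult_eq_reg_l kappa); [field_simplify; lra | lra].
Qed.

End Directrix.

Theorem mainTheorem5 (kappa z0 : R) (x z th : R -> R) :
  0 < kappa -> 0 < z0 ->
  directrix_solution kappa z0 x z th ->
  (forall p, cyl_surface x z p ->
     z0 <= height p <= sqrt (4 / kappa + z0 ^ 2)) /\
  (exists p, cyl_surface x z p /\ height p = z0) /\
  (exists p, cyl_surface x z p /\ height p = sqrt (4 / kappa + z0 ^ 2)).
Proof.
intros Hkappa Hz0 [_ [Hz [Hth [_ [Hth0 Hz_0]]]]].
split; [| split].
- intros p [s [t ->]].
  exact (height_bounds kappa z0 z th Hkappa Hz0 Hz Hth Hth0 Hz_0 s).
- exists (x 0, 0, z 0). split; [exists 0, 0; reflexivity | exact Hz_0].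
- destruct (height_max_attained kappa z0 z th Hkappa Hz0 Hz Hth Hth0 Hz_0)
    as [s Hs].
  exists (x s, 0, z s). split; [exists s, 0; reflexivity | exact Hs].
Qed.
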